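(* Let $G$ be an M-graph and let $D$ be an effective real divisor on $G$. Then $D$ is linearly equivalent to a totally real effective divisor on $G$.
   Context: A finite graph $G$ has vertex set $V(G)$, edge set $E(G)$ and incidence function $\psi$ assigning to each edge a set of one or two vertices (loops and multiple edges allowed); $G$ is assumed connected, with genus $g(G)=|E(G)|-|V(G)|+1$ (for a possibly disconnected graph $H$, $g(H)=c(H)+|E(H)|-|V(H)|$ with $c(H)$ its number of components). A real structure is a pair of involutions of $V(G)$, $E(G)$, written $v\mapsto\overline v$, $e\mapsto\overline e$, with $\psi(\overline e)=\overline{\psi(e)}$. Real vertices/edges are the fixed ones; $V_{\mathbb R}(G)$ is the set of real vertices; a real edge is isolated if not all of its ends are real, non-isolated otherwise. $G(\mathbb R)$ is the subgraph with vertices $V_{\mathbb R}(G)$ and edges the non-isolated real edges. $s(G)=e^i(G)+\sum_i(g(G(\mathbb R)_i)+1)$, the sum over the connected components $G(\mathbb R)_i$ of $G(\mathbb R)$ and $e^i(G)$ the number of isolated real edges. $G$ is an M-graph if it has no isolated real edge and $s(G)=g(G)+1$. Divisors are formal $\mathbb Z$-combinations of vertices; $\overline D(v)=D(\overline v)$; $D$ is real if $\overline D=D$, and totally real if moreover its support is contained in $V_{\mathbb R}(G)$. For $f:V(G)\to\mathbb Z$, $\Delta(f)(v)=\sum_{e,\,\psi(e)=\{v,w\}}(f(w)-f(v))$; $D_1\sim D_2$ iff $D_2-D_1=\Delta(f)$ for some $f$. *)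

From HB Require Import structures.
From mathcomp Require Import all_boot all_order all_algebra.
Set Implicit Arguments. Unset Strict Implicit. Unset Printing Implicit Defensive.
Import Order.TTheory GRing.Theory Num.Theory.
Local Open Scope ring_scope.

(* A finite graph with loops and multiple edges: vertex set V, edge set E,
   incidence function psi assigning to each edge a set of one or two vertices. *)
Record graph := Graph {
  gV : finType;
  gE : finType;
  psi : gE -> {set gV};
  psi_card : forall e, (0 < #|psi e| <= 2)%N
}.

Section GraphDefs.
Variable G : graph.
Notation V := (gV G).
Notation E := (gE G).

Definition adj : rel V := fun x y => [exists e, (x \in psi e) && (y \in psi e)].
Definition connected_graph : Prop := forall x y : V, connect adj x y.

Definition genus : int := (#|E|%:Z - #|V|%:Z + 1)%R.

Record real_structure := RealStructure {
  conjV : V -> V;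
  conjE : E -> E;
  conjV_inv : involutive conjV;
  conjE_inv : involutive conjE;
  conj_psi : forall e, psi (conjE e) = conjV @: psi e
}.

Variable rs : real_structure.

Definition VR : {set V} := [set v | conjV rs v == v].
Definition ER : {set E} := [set e | conjE rs e == e].
Definition isolated (e : E) : bool := (e \in ER) && ~~ (psi e \subset VR).
Definition nonisolated_real (e : E) : bool := (e \in ER) && (psi e \subset VR).

(* G(R): vertices VR, edges the non-isolated real edges *)
Definition adjR : rel V :=
  fun x y => [exists e, [&& nonisolated_real e, x \in psi e & y \in psi e]].

Definition GR_components : {set {set V}} :=
  [set [set y | connect adjR x y] | x in VR].

Definition comp_genus (C : {set V}) : int :=
  (#|[set e | nonisolated_real e & psi e \subset C]|%:Z - #|C|%:Z + 1)%R.

Definition e_iso : nat := #|[set e | isolated e]|.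

Definition s_inv : int := (e_iso%:Z + \sum_(C in GR_components) (comp_genus C + 1))%R.

Definition M_graph : Prop :=
  connected_graph /\ e_iso = 0%N /\ s_inv = (genus + 1)%R.

Definition divisor := {ffun V -> int}.
Definition effective (D : divisor) : Prop := forall v, 0 <= D v.
Definition real_div (D : divisor) : Prop := forall v, D (conjV rs v) = D v.
Definition totally_real (D : divisor) : Prop :=
  real_div D /\ forall v, D v != 0 -> v \in VR.

(* Laplacian: Delta(f)(v) = sum over edges e with psi e = {v,w} of f w - f v
   (loops contribute 0). *)
Definition laplacian (f : V -> int) (v : V) : int :=
  \sum_(e | v \in psi e) \sum_(w in psi e :\ v) (f w - f v).

Definition lin_equiv (D1 D2 : divisor) : Prop :=
  exists f : V -> int, forall v, D2 v - D1 v = laplacian f v.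

End GraphDefs.

From mathcomp Require Import all_boot all_order all_algebra zify.
Set Implicit Arguments. Unset Strict Implicit. Unset Printing Implicit Defensive.
Import Order.TTheory GRing.Theory Num.Theory.

(* Let d be a conjugation-invariant distance to the real vertices.  While D
   has a chip on a non-real vertex w, choose an edge e0 from w to a vertex x
   with d x < d w.  The M-graph condition says that, once every component of
   G(R) and every pair {v, conj v} is collapsed, the non-real edges form a tree
   modulo conjugation; hence deleting e0 and conj e0 separates w from x.
   Firing the side S of w moves a chip from w to x and one from conj w to
   conj x: the divisor stays effective and real, and the potential
   sum_v D(v) d(v) drops, so the process ends with a totally real divisor. *)

Lemma connect_propagate (T : finType) (r : rel T) (Q : T -> Prop) x y :
  (forall a b, r a b -> Q a -> Q b) -> connect r x y -> Q x -> Q y.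
Proof.
move=> rQ /connectP[p + ->{y}]; elim: p x => [|a p IHp] x //= /andP[xa ap] Qx.
exact: IHp ap (rQ _ _ xa Qx).
Qed.

Section TopEnd.

Variables (V E : finType) (ends : E -> {set V}).
Hypothesis ends_le2 : forall e, #|ends e| <= 2.

Lemma mem_ends2 e y z u :
  y \in ends e -> z \in ends e -> y != z -> u \in ends e -> (u == y) || (u == z).
Proof.
move=> ye ze yz ue; apply: contraTT (ends_le2 e); rewrite negb_or -ltnNge => /andP[uy uz].
have yzu : [set y; z; u] \subset ends e.
  by apply/subsetP => a; rewrite !inE => /orP[/orP[]|] /eqP->.
apply: leq_trans (subset_leq_card yzu).
by rewrite -setUA cardsU1 cardsU1 cards1 !inE (negbTE yz) !(eq_sym _ u) (negbTE uy) (negbTE uz).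
Qed.

Definition top_end (d : V -> nat) (e : E) (t : V) :=
  (t \in ends e) && [forall u in ends e, (u != t) ==> (d u < d t)].

Lemma top_end_uniq d e t1 t2 : top_end d e t1 -> top_end d e t2 -> t1 = t2.
Proof.
case/andP=> t1e /forall_inP lt1 /andP[t2e /forall_inP lt2].
apply: contraTeq isT => t12; have := lt1 _ t2e; have := lt2 _ t1e.
by rewrite t12 eq_sym t12 /= => /ltn_trans/[apply]; rewrite ltnn.
Qed.

Lemma top_endI d e y z : y \in ends e -> z \in ends e -> d z < d y -> top_end d e y.
Proof.
move=> ye ze zy; rewrite /top_end ye; apply/forall_inP => u ue; apply/implyP => uy.
have yz : y != z by apply: contraTneq zy => ->; rewrite ltnn.
by case/orP: (mem_ends2 ye ze yz ue) => /eqP uE; [rewrite uE eqxx in uy | rewrite uE].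
Qed.

Lemma sum_card_top_end_le d (A : {pred V}) (T : {set E}) :
  \sum_(v in A) #|[set e in T | top_end d e v]| <= #|T|.
Proof.
pose F v := [set e in T | top_end d e v].
have disjF u v : u != v -> [disjoint F u & F v].
  move=> uv; rewrite -setI_eq0; apply/eqP/setP => e; rewrite in_set0 in_setI !in_set.
  apply/negP => /andP[/andP[_ tu] /andP[_ tv]].
  by rewrite (top_end_uniq tu tv) eqxx in uv.
apply: (@leq_trans (\sum_v #|F v|)).
  by rewrite [leqLHS]big_mkcond; apply: leq_sum => v _; case: ifP.
rewrite (eq_bigr (fun v => \sum_(e in F v) 1)) => [|v _]; last by rewrite sum1_card.
rewrite -(partition_disjoint_bigcup _ _ disjF) sum1_card.
by apply/subset_leq_card/bigcupsP => v _; apply/subsetP => e; rewrite inE => /andP[].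
Qed.

End TopEnd.

Section Levels.

Variables (V E : finType) (ends : E -> {set V}) (P : pred E).
Variables (cls : V -> {set V}) (R0 : {set V}).
Hypotheses (cls_refl : forall v, v \in cls v)
  (cls_eq : forall u v, u \in cls v -> cls u = cls v)
  (R0_cls : forall u v, u \in cls v -> v \in R0 -> u \in R0).

Definition level_step (R : {set V}) : {set V} :=
  R :|: [set v | [exists y in cls v, exists e,
     [&& P e, y \in ends e & [exists z in R, z \in ends e]]]].

Definition level n := iter n level_step R0.

Definition reachable v := exists n, v \in level n.

Lemma level_cls n u v : u \in cls v -> v \in level n -> u \in level n.
Proof.
move=> uv; elim: n v uv => [|n IHn] v uv; first exact: R0_cls.
rewrite /level iterS -/(level n) !inE => /orP[/(IHn _ uv)->//|vS].
by rewrite (cls_eq uv) vS orbT.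
Qed.

Lemma reachable_R0 v : v \in R0 -> reachable v.
Proof. by exists 0. Qed.

Lemma reachable_cls u v : u \in cls v -> reachable v -> reachable u.
Proof. by move=> uv [n vn]; exists n; apply: level_cls vn. Qed.

Lemma reachable_edge e y z :
  P e -> y \in ends e -> z \in ends e -> reachable z -> reachable y.
Proof.
move=> Pe ye ze [n zn]; exists n.+1; rewrite /level iterS -/(level n) !inE.
apply/orP; right; apply/exists_inP; exists y => //; apply/existsP; exists e.
by rewrite Pe ye; apply/exists_inP; exists z.
Qed.

(* Breadth-first levels from R0, where moving inside a class is free. *)
Lemma level_function : (forall v, reachable v) ->
  exists d : V -> nat, (forall u v, u \in cls v -> d u = d v) /\
    (forall v, v \notin R0 -> exists y e z,
       [/\ y \in cls v, P e, y \in ends e, z \in ends e & d z < d y]).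
Proof.
move=> reach; pose d v := ex_minn (reach v).
have d_level v : v \in level (d v) by rewrite /d; case: ex_minnP.
have d_min v n : v \in level n -> d v <= n.
  by rewrite /d; case: ex_minnP => m _; apply.
have d_cls u v : u \in cls v -> d u = d v.
  move=> uv; apply/eqP; rewrite eqn_leq !d_min ?(level_cls uv) //.
  by apply: (level_cls (u := v)) (d_level u); rewrite (cls_eq uv).
exists d; split => // v vR0; have := d_level v.
case dv: (d v) => [|n]; first by rewrite /level /= (negbTE vR0).
rewrite /level iterS -/(level n) !inE => /orP[/d_min|]; first by rewrite dv ltnn.
case/exists_inP => y yv /existsP[e /and3P[Pe ye /exists_inP[z zn ze]]].
exists y, e, z; split => //; rewrite (d_cls _ _ yv) dv ltnS.
exact: d_min.
Qed.

End Levels.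

Local Open Scope ring_scope.

Lemma two_chip_moves_ge0 (n : int) (bx bw bx' bw' : bool) :
  0 <= n -> (bw || bw' -> 0 < n) -> ~~ (bw && bw') ->
  0 <= n + (bx%:Z - bw%:Z + (bx'%:Z - bw'%:Z)).
Proof. by case: bx; case: bw; case: bx'; case: bw' => //=; lia. Qed.

Section GraphFacts.

Variable G : graph.
Local Notation V := (gV G).
Local Notation E := (gE G).

Lemma psi_le2 (e : E) : (#|psi e| <= 2)%N.
Proof. by case/andP: (psi_card e). Qed.

Lemma psi_set2 (e : E) a b : a \in psi e -> b \in psi e -> a != b -> psi e = [set a; b].
Proof.
move=> ae be ab; apply/setP => u; rewrite in_set2; apply/idP/idP.
  exact: (mem_ends2 (@psi_le2) ae be ab).
by case/orP => /eqP->.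
Qed.

Lemma connected_propagate (Q : V -> Prop) r :
  connected_graph G -> (forall (e : E) y z, y \in psi e -> z \in psi e -> Q z -> Q y) ->
  Q r -> forall v, Q v.
Proof.
move=> conn Qe Qr v; apply: connect_propagate (conn r v) Qr.
by move=> a b /existsP[e /andP[ae be]]; apply: Qe be ae.
Qed.

Lemma laplacianD (f g : V -> int) v :
  laplacian (fun u => f u + g u) v = laplacian f v + laplacian g v.
Proof.
rewrite /laplacian -big_split; apply: eq_bigr => e _; rewrite -big_split.
by apply: eq_bigr => u _ /=; rewrite opprD addrACA.
Qed.

Lemma lin_equiv_refl (D : divisor G) : lin_equiv D D.
Proof.
exists (fun=> 0) => v; rewrite subrr /laplacian big1 // => e _.
by rewrite big1 // => u _; rewrite subrr.
Qed.

Lemma lin_equiv_trans (D1 D2 D3 : divisor G) :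
  lin_equiv D1 D2 -> lin_equiv D2 D3 -> lin_equiv D1 D3.
Proof.
move=> [f Df] [g Dg]; exists (fun u => f u + g u) => v.
by rewrite laplacianD -Df -Dg [RHS]addrC addrA subrK.
Qed.

Lemma laplacian_indicator_edge (S : {set V}) (A : {set V}) a b v :
  A = [set a; b] -> a \in S -> b \notin S ->
  (if v \in A then \sum_(u in A :\ v) ((u \in S)%:Z - (v \in S)%:Z) else 0) =
  (v == b)%:Z - (v == a)%:Z.
Proof.
move=> -> aS bS; have ab : a != b by apply: contraNneq bS => <-.
have [->|va] := eqVneq v a.
  by rewrite setU11 setU1K ?inE // big_set1 aS (negbTE bS) (negbTE ab).
have [->|vb] := eqVneq v b.
  by rewrite setU1r ?set11 // setUC setU1K ?inE 1?eq_sym // big_set1 aS (negbTE bS).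
by rewrite !inE (negbTE va) (negbTE vb).
Qed.

Lemma laplacian_indicator (S : {set V}) (e1 e2 : E) a1 b1 a2 b2 v :
  e1 != e2 -> psi e1 = [set a1; b1] -> psi e2 = [set a2; b2] ->
  a1 \in S -> b1 \notin S -> a2 \in S -> b2 \notin S ->
  (forall (e : E) y z, e != e1 -> e != e2 -> y \in psi e -> z \in psi e ->
     y \in S -> z \in S) ->
  laplacian (fun u => (u \in S)%:Z) v =
  (v == b1)%:Z - (v == a1)%:Z + ((v == b2)%:Z - (v == a2)%:Z).
Proof.
move=> e12 e1E e2E a1S b1S a2S b2S Sclosed.
have e21 : e2 != e1 by rewrite eq_sym.
rewrite /laplacian big_mkcond (bigD1 e1) //= (bigD1 e2) //=.
rewrite (laplacian_indicator_edge v e1E a1S b1S).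
rewrite (laplacian_indicator_edge v e2E a2S b2S).
rewrite big1 ?addr0 // => e /andP[ne1 ne2]; case: ifP => // ve.
apply: big1 => u; rewrite !inE => /andP[_ ue].
suff -> : (u \in S) = (v \in S) by rewrite subrr.
by apply/idP/idP; [apply: Sclosed ne1 ne2 ue ve | apply: Sclosed ne1 ne2 ve ue].
Qed.

Definition potential (d : V -> nat) (D : divisor G) : int := \sum_v D v * (d v)%:Z.

Lemma potential_ge0 d D : effective D -> 0 <= potential d D.
Proof. by move=> D_ge0; apply: sumr_ge0 => v _; apply: mulr_ge0. Qed.

End GraphFacts.

Section RealStructure.

Variables (G : graph) (rs : real_structure G).
Local Notation V := (gV G).
Local Notation E := (gE G).

Lemma conjV_psi (e : E) v : v \in psi e -> conjV rs v \in psi (conjE rs e).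
Proof. by move=> ve; rewrite conj_psi; apply: imset_f. Qed.

Lemma conjV_eq u v : (conjV rs u == v) = (u == conjV rs v).
Proof. by rewrite -{1}(conjV_inv rs v) (can_eq (conjV_inv rs)). Qed.

Lemma conjE_eq (e f : E) : (conjE rs e == f) = (e == conjE rs f).
Proof. by rewrite -{1}(conjE_inv rs f) (can_eq (conjE_inv rs)). Qed.

Lemma conjV_VR v : (conjV rs v \in VR rs) = (v \in VR rs).
Proof. by rewrite !inE conjV_inv eq_sym. Qed.

Lemma conjE_ER (e : E) : (conjE rs e \in ER rs) = (e \in ER rs).
Proof. by rewrite !inE conjE_inv eq_sym. Qed.

Definition conj_orbit v : {set V} := [set v; conjV rs v].

Definition component v : {set V} := [set u | connect (adjR rs) v u].

Definition block v : {set V} := if v \in VR rs then component v else conj_orbit v.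

Lemma conj_orbit_refl v : v \in conj_orbit v.
Proof. exact: setU11. Qed.

Lemma conj_orbit_eq u v : u \in conj_orbit v -> conj_orbit u = conj_orbit v.
Proof.
rewrite !inE => /orP[] /eqP->; rewrite // /conj_orbit conjV_inv.
by apply/setP => y; rewrite !inE orbC.
Qed.

Lemma adjR_sym : symmetric (adjR rs).
Proof. by move=> x y; apply/existsP/existsP => -[e /and3P[? ? ?]]; exists e; apply/and3P. Qed.

Lemma adjR_VR x y : adjR rs x y -> y \in VR rs.
Proof. by case/existsP=> e /and3P[/andP[_ /subsetP eR] _ /eR]. Qed.

Lemma component_VR x y : y \in component x -> x \in VR rs -> y \in VR rs.
Proof.
rewrite inE => xy; apply: (connect_propagate (Q := fun v => v \in VR rs)) xy.
by move=> a b /adjR_VR.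
Qed.

Lemma block_refl v : v \in block v.
Proof. by rewrite /block; case: ifP; rewrite !inE ?connect0 ?eqxx. Qed.

Lemma conjV_block v : conjV rs v \in block v.
Proof.
rewrite /block; case: ifP => vR; last by rewrite !inE eqxx orbT.
by move: vR; rewrite inE => /eqP->; rewrite inE connect0.
Qed.

Lemma block_VR u v : u \in block v -> (u \in VR rs) = (v \in VR rs).
Proof.
rewrite /block; case: ifP => vR; first by move/component_VR->.
by rewrite in_set2 => /orP[] /eqP->; rewrite ?conjV_VR vR.
Qed.

Lemma block_eq u v : u \in block v -> block u = block v.
Proof.
move=> uv; rewrite /block (block_VR uv); move: uv; rewrite /block.
case: ifP => _; last exact: conj_orbit_eq.
rewrite inE => vu; apply/setP => y; rewrite !inE.
by rewrite (same_connect (sym_connect_sym adjR_sym) vu).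
Qed.

Lemma components_partition : partition (GR_components rs) (VR rs).
Proof.
have -> : GR_components rs = equivalence_partition (connect (adjR rs)) (VR rs).
  apply: eq_in_imset => x xR; apply/setP => y; rewrite !inE andb_idl // => xy.
  by have := component_VR (y := y) _ xR; rewrite !inE; apply.
apply: equivalence_partitionP => x y z _ _ _; split; first exact: connect0.
by move=> xy; rewrite (same_connect (sym_connect_sym adjR_sym) xy).
Qed.

Lemma block_component x : x \in VR rs -> block x \in GR_components rs.
Proof. by move=> xR; rewrite /block xR; apply: imset_f. Qed.

Lemma componentP C : C \in GR_components rs -> exists2 x, x \in VR rs & C = block x.
Proof. by case/imsetP => x xR ->; exists x; rewrite // /block xR. Qed.

Lemma nonisolated_block (e : E) y z :
  nonisolated_real rs e -> y \in psi e -> z \in psi e -> z \in block y.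
Proof.
move=> eR ye ze; have /andP[_ /subsetP/(_ y ye) yR] := eR.
by rewrite /block yR inE connect1 //; apply/existsP; exists e; apply/and3P.
Qed.

Lemma sum_card_component_edges :
  (\sum_(C in GR_components rs) #|[set e | nonisolated_real rs e & psi e \subset C]|
   = #|[set e | nonisolated_real rs e]|)%N.
Proof.
under eq_bigr => C _ do rewrite -sum1_card big_mkcond /=.
rewrite exchange_big /= -sum1_card [RHS]big_mkcond /=.
apply: eq_bigr => e _; rewrite inE; case: ifP => eR /=; last first.
  by apply: big1 => C _; rewrite inE eR.
have [y ye] : exists y, y \in psi e by apply/card_gt0P; case/andP: (psi_card e).
have yR : y \in VR rs by case/andP: eR => _ /subsetP; apply.
rewrite (bigD1 (block y)) ?block_component //= inE eR big1 /=.
  by rewrite ifT //; apply/subsetP => z; apply: nonisolated_block.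
move=> C /andP[/componentP[x _ ->] yx]; rewrite inE eR; case: ifP => // /subsetP.
by move/(_ y ye)/block_eq => yx'; rewrite yx' eqxx in yx.
Qed.

Section MGraph.

Hypothesis HM : M_graph rs.

Lemma real_edge_VR (e : E) v : e \in ER rs -> v \in psi e -> v \in VR rs.
Proof.
case: HM => _ [iso0 _] eR ve; apply/negPn/negP => vR.
suff : (0 < e_iso rs)%N by rewrite iso0.
by apply/card_gt0P; exists e; rewrite inE /isolated eR; apply/subsetPn; exists v.
Qed.

Lemma nonisolated_ER (e : E) : nonisolated_real rs e = (e \in ER rs).
Proof.
rewrite /nonisolated_real andb_idr // => eR.
by apply/subsetP => v; apply: real_edge_VR.
Qed.

Lemma block_edge (e : E) y z : e \in ER rs -> y \in psi e -> z \in psi e -> z \in block y.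
Proof. by rewrite -nonisolated_ER; apply: nonisolated_block. Qed.

(* The M-condition s(G) = g(G) + 1 in terms of non-real vertices and edges. *)
Lemma M_count :
  (#|~: ER rs| + 2 = #|~: VR rs| + 2 * #|GR_components rs|)%N.
Proof.
have [_ [iso0]] := HM; rewrite /s_inv /genus iso0 add0r.
have PoszS (I : finType) (F : I -> nat) (A : {pred I}) :
    Posz (\sum_(i in A) F i)%N = \sum_(i in A) Posz (F i).
  exact: (big_morph Posz PoszD (erefl _)).
have -> : \sum_(C in GR_components rs) (comp_genus rs C + 1) =
    Posz (\sum_(C in GR_components rs)
       (#|[set e | nonisolated_real rs e & psi e \subset C]| + 2))%N
  - Posz (\sum_(C in GR_components rs) #|C|)%N.
  by rewrite !PoszS -sumrB; apply: eq_bigr => C _; rewrite /comp_genus; lia.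
rewrite big_split /= sum_card_component_edges -(card_partition components_partition).
have -> : [set e | nonisolated_real rs e] = ER rs.
  by apply/setP => e; rewrite inE nonisolated_ER.
rewrite sum_nat_const.
have := cardsC (ER rs); have := cardsC (VR rs).
move: #|VR rs| #|~: VR rs| #|ER rs| #|~: ER rs| #|GR_components rs| #|V| #|E|; lia.
Qed.

Lemma VR_nonempty (w : V) : exists r, r \in VR rs.
Proof.
have [VR0|[r rR]] := set_0Vmem (VR rs); last by exists r.
exfalso.
have ER0 : ER rs = set0.
  apply/setP => e; rewrite in_set0; apply/negP => eR.
  have [y ye] : exists y, y \in psi e by apply/card_gt0P; case/andP: (psi_card e).
  by have := real_edge_VR eR ye; rewrite VR0 in_set0.
have comps0 : GR_components rs = set0 by rewrite /GR_components VR0 imset0.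
have set1_eq (u v : V) : u \in [set v] -> [set u] = [set v] by move/set1P->.
have R0_set1 u v : u \in [set v] -> v \in [set w] -> u \in [set w] by move/set1P->.
have reach := connected_propagate
  (Q := reachable (@psi G) predT (fun v => [set v]) [set w]) (proj1 HM)
  (fun e y z ye ze => reachable_edge (@set11 _) (isT : predT e) ye ze)
  (reachable_R0 _ _ _ (set11 w)).
have [d [_ par]] := level_function (@set11 _) set1_eq R0_set1 reach.
have : (#|[set~ w]| <= #|[set: E]|)%N.
  apply: leq_trans (sum_card_top_end_le (@psi G) d [set~ w] [set: E]).
  rewrite -sum1_card; apply: leq_sum => v; rewrite !inE => vw.
  have /par[y [e [z [/set1P -> _ ve ze zv]]]] : v \notin [set w] by rewrite inE.
  by apply/card_gt0P; exists e; rewrite !inE /=; exact: (top_endI (@psi_le2 G) ve ze zv).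
have := M_count; rewrite ER0 VR0 comps0 !setC0 cards0 cardsC1 !cardsT.
have : (0 < #|V|)%N by apply/card_gt0P; exists w.
move: #|V| #|E|; lia.
Qed.

Lemma real_distance : exists d : V -> nat, (forall v, d (conjV rs v) = d v) /\
  (forall w, w \notin VR rs -> exists e x, [/\ w \in psi e, x \in psi e & (d x < d w)%N]).
Proof.
have R0_orbit u v : u \in conj_orbit v -> v \in VR rs -> u \in VR rs.
  by rewrite in_set2 => /orP[] /eqP->; rewrite ?conjV_VR.
have reach v : reachable (@psi G) predT conj_orbit (VR rs) v.
  have [r rR] := VR_nonempty v.
  exact: (connected_propagate (proj1 HM)
    (fun e y z ye ze => reachable_edge conj_orbit_refl (isT : predT e) ye ze)
    (reachable_R0 _ _ _ rR)).
have [d [d_orbit par]] := level_function conj_orbit_refl conj_orbit_eq R0_orbit reach.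
have d_conj v : d (conjV rs v) = d v by apply/d_orbit/setU1r/set11.
exists d; split => // w /par[y [e [z [yw _ ye ze zy]]]].
move: yw; rewrite in_set2 => /orP[] /eqP yE; first by exists e, z; rewrite -yE.
exists (conjE rs e), (conjV rs z).
by rewrite -[w](conjV_inv rs) -yE !d_conj; split => //; apply: conjV_psi.
Qed.

(* If w were still connected to x once e0 and conj e0 are deleted, a
   breadth-first search from the block of w would give every other non-real
   vertex one, and each of the k components of G(R) two, of the remaining
   non-real edges as parent edges: |V \ V_R| - 2 + 2 k <= |E \ E_R| - 2,
   against [M_count]. *)
Section Cut.

Variables (e0 : E) (w : V).
Hypotheses (w_nonreal : w \notin VR rs) (e0_nonreal : e0 \notin ER rs).

Let T := ~: ER rs :\: [set e0; conjE rs e0].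

Lemma conjE_T e : (conjE rs e \in T) = (e \in T).
Proof.
by rewrite !in_setD !in_setC !in_set2 conjE_ER !conjE_eq conjE_inv orbC.
Qed.

Section Count.

Variable d : V -> nat.
Hypotheses (d_block : forall u v, u \in block v -> d u = d v)
  (par : forall v, v \notin block w -> exists y e z,
     [/\ y \in block v, e \in T, y \in psi e, z \in psi e & (d z < d y)%N]).

Local Notation N v := #|[set e in T | top_end (@psi G) d e v]|.

Let d_conj v : d (conjV rs v) = d v.
Proof. exact/d_block/conjV_block. Qed.

Let top_end_conj e y z : y \in psi e -> z \in psi e -> (d z < d y)%N ->
  top_end (@psi G) d (conjE rs e) (conjV rs y).
Proof.
move=> ye ze zy; apply: (top_endI (@psi_le2 G) (conjV_psi ye) (conjV_psi ze)).
by rewrite !d_conj.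
Qed.

Lemma nonreal_card_top_end v : v \notin VR rs -> v \notin block w -> (0 < N v)%N.
Proof.
move=> vR /par[y [e [z [yv eT ye ze zy]]]]; apply/card_gt0P.
rewrite (d_block yv) in zy; move: yv; rewrite /block (negbTE vR) in_set2.
case/orP => /eqP yE; subst y.
  by exists e; rewrite inE eT (top_endI (@psi_le2 G) ye ze zy).
exists (conjE rs e); rewrite inE conjE_T eT -[v in top_end _ _ _ v](conjV_inv rs).
by apply: top_end_conj ye ze _; rewrite d_conj.
Qed.

Lemma component_card_top_end C : C \in GR_components rs -> (2 <= \sum_(v in C) N v)%N.
Proof.
case/componentP => x xR ->.
have /par[y [e [z [yx eT ye ze zy]]]] : x \notin block w.
  by apply: contraL xR => /block_VR->.
have /[!inE] /eqP yR : y \in VR rs by rewrite (block_VR yx).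
have ee : e != conjE rs e.
  by rewrite eq_sym -in_set; move: eT; rewrite !inE => /andP[_ ->].
suff Ny : (2 <= N y)%N by rewrite (bigD1 y) //=; apply: leq_trans Ny (leq_addr _ _).
apply: (@leq_trans #|[set e; conjE rs e]|); first by rewrite cards2 ee.
apply/subset_leq_card/subsetP => f.
rewrite in_set2 inE => /orP[] /eqP->; first by rewrite eT (top_endI (@psi_le2 G) ye ze zy).
by rewrite conjE_T eT -[y in top_end _ _ _ y]yR (top_end_conj ye ze zy).
Qed.

Lemma spanning_levels_absurd : False.
Proof.
have := sum_card_top_end_le (@psi G) d [set: V] T.
rewrite (big_setID (VR rs)) /= setTI setTD (set_partition_big _ components_partition).
rewrite (big_setID (block w)) /=.
have comps_le : (#|GR_components rs| * 2 <= \sum_(C in GR_components rs) \sum_(v in C) N v)%N.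
  by rewrite -sum_nat_const; apply: leq_sum => C; apply: component_card_top_end.
have nonreal_le : (#|~: VR rs :\: block w| <= \sum_(v in ~: VR rs :\: block w) N v)%N.
  rewrite -sum1_card; apply: leq_sum => v; rewrite in_setD in_setC => /andP[vw vR].
  exact: nonreal_card_top_end.
have card_block : (#|~: VR rs :\: block w| + 2 = #|~: VR rs|)%N.
  have ww : conjV rs w != w by move: w_nonreal; rewrite inE.
  have sub : block w \subset ~: VR rs.
    apply/subsetP => v /block_VR vw; rewrite in_setC vw //.
  have cw : #|block w| = 2%N by rewrite /block (negbTE w_nonreal) cards2 eq_sym ww.
  by rewrite cardsD (setIidPr sub) cw subnK // -cw subset_leq_card.
have card_T : (#|T| + 2 = #|~: ER rs|)%N.
  have ee : conjE rs e0 != e0 by move: e0_nonreal; rewrite inE.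
  have sub : [set e0; conjE rs e0] \subset ~: ER rs.
    by apply/subsetP => f; rewrite in_set2 in_setC => /orP[] /eqP->; rewrite ?conjE_ER.
  have ce : #|[set e0; conjE rs e0]| = 2%N by rewrite cards2 eq_sym ee.
  by rewrite cardsD (setIidPr sub) ce subnK // -ce subset_leq_card.
move/(leq_trans (leq_add comps_le (leq_add (leq0n _) nonreal_le))).
move: card_block card_T M_count.
move: #|_ :\: block w| #|T| #|~: VR rs| #|~: ER rs| #|GR_components rs|; lia.
Qed.

End Count.

Lemma cut_separates x :
  w \in psi e0 -> x \in psi e0 -> w != x ->
  exists S : {set V}, [/\ w \in S, x \notin S,
    forall v, (conjV rs v \in S) = (v \in S) &
    forall e y z, e != e0 -> e != conjE rs e0 -> y \in psi e -> z \in psi e ->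
      y \in S -> z \in S].
Proof.
move=> we0 xe0 wx.
pose r : rel V := fun u v => (v \in block u) || [exists e in T, (u \in psi e) && (v \in psi e)].
pose S := [set v | connect r w v].
have S_r u v : r u v -> u \in S -> v \in S.
  by rewrite !inE => uv /connect_trans; apply; apply: connect1.
have S_conj v : v \in S -> conjV rs v \in S by apply/S_r/orP; left; apply: conjV_block.
have S_edge e y z : e != e0 -> e != conjE rs e0 -> y \in psi e -> z \in psi e ->
    y \in S -> z \in S.
  move=> ne0 ne0' ye ze; apply: S_r; apply/orP.
  have [eR|eR] := boolP (e \in ER rs); first by left; apply: block_edge eR ye ze.
  right; apply/exists_inP; exists e; last by apply/andP.
  by rewrite in_setD in_setC eR in_set2 negb_or ne0 ne0'.
have wS : w \in S by rewrite inE connect0.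
exists S; split => //; last first.
- move=> v; apply/idP/idP => [|/S_conj //].
  by move/S_conj; rewrite conjV_inv.
apply/negP => xS.
have e0S y : y \in psi e0 -> y \in S.
  by move/(mem_ends2 (@psi_le2 G) we0 xe0 wx)/orP => -[] /eqP->.
have allS : forall v, v \in S.
  apply: (connected_propagate (proj1 HM) _ wS) => e y z ye ze zS.
  have [eE|ne0] := eqVneq e e0; first by rewrite eE in ye; apply: e0S.
  have [eE|ne0'] := eqVneq e (conjE rs e0); last exact: S_edge ze ye zS.
  have := conjV_psi ye; rewrite eE conjE_inv => /e0S /S_conj.
  by rewrite conjV_inv.
have R0_block u v : u \in block v -> v \in block w -> u \in block w.
  by move=> uv /block_eq <-.
have reach v : reachable (@psi G) [pred e | e \in T] block (block w) v.
  have wv : connect r w v by have := allS v; rewrite inE.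
  apply: (connect_propagate _ wv (reachable_R0 _ _ _ (block_refl w))) => a b.
  case/orP => [ba|/exists_inP[e eT /andP[ae be]]].
    exact: (reachable_cls block_eq R0_block ba).
  exact: (reachable_edge block_refl eT be ae).
have [d [d_block par]] := level_function block_refl block_eq R0_block reach.
exact: spanning_levels_absurd d_block par.
Qed.

End Cut.

(* Fire the cut S separating w from x: a chip moves from w to x and one from
   conj w to conj x, which lowers the potential by 2 (d w - d x). *)
Lemma potential_step d D w :
  (forall v, d (conjV rs v) = d v) ->
  (forall w, w \notin VR rs -> exists e x, [/\ w \in psi e, x \in psi e & (d x < d w)%N]) ->
  effective D -> real_div rs D -> w \notin VR rs -> D w != 0 ->
  exists D1, [/\ effective D1, real_div rs D1, lin_equiv D D1 & potential d D1 < potential d D].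
Proof.
move=> d_conj par D_ge0 D_real wR Dw.
have [e0 [x [we0 xe0 xw]]] := par w wR.
have wx : w != x by apply: contraTneq xw => ->; rewrite ltnn.
have e0R : e0 \notin ER rs by apply: contra wR => /real_edge_VR; apply.
have [S [wS xS S_conj S_edge]] := cut_separates wR e0R we0 xe0 wx.
have ee : e0 != conjE rs e0 by rewrite eq_sym; move: e0R; rewrite inE.
have wx' : conjV rs w != conjV rs x by rewrite (can_eq (conjV_inv rs)).
have lap v := laplacian_indicator v ee (psi_set2 we0 xe0 wx)
  (psi_set2 (conjV_psi we0) (conjV_psi xe0) wx') wS xS
  (etrans (S_conj w) wS) (negbT (etrans (S_conj x) (negbTE xS))) S_edge.
pose D1 : divisor G := [ffun v => D v + laplacian (fun u => (u \in S)%:Z) v].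
have D1E v : D1 v = D v + ((v == x)%:Z - (v == w)%:Z +
    ((v == conjV rs x)%:Z - (v == conjV rs w)%:Z)) by rewrite ffunE lap.
exists D1; split.
- move=> v; rewrite D1E; apply: two_chip_moves_ge0 (D_ge0 v) _ _.
    by case/orP => /eqP->; rewrite ?D_real lt0r Dw D_ge0.
  by apply: contraNN wR => /andP[/eqP-> /eqP wE]; rewrite inE -wE.
- by move=> v; rewrite !D1E D_real !conjV_eq !conjV_inv [X in _ + X]addrC.
- by exists (fun u => (u \in S)%:Z) => v; rewrite ffunE addrC addKr.
- have sum_delta a (F : V -> int) : \sum_v (v == a)%:Z * F v = F a.
    by rewrite (bigD1 a) //= eqxx mul1r big1 ?addr0 // => v /negbTE->; rewrite mul0r.
  rewrite /potential; under eq_bigr => v _ do rewrite D1E !mulrDl !mulNr.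
  rewrite !big_split /= !sumrN !sum_delta !d_conj.
  by rewrite -[X in _ < X]addr0 ltrD2l; move: xw; lia.
Qed.

End MGraph.

End RealStructure.

Theorem theorem3 (G : graph) (rs : real_structure G) (D : divisor G) :
  M_graph rs -> effective D -> real_div rs D ->
  exists D' : divisor G, effective D' /\ totally_real rs D' /\ lin_equiv D D'.
Proof.
move=> HM D_ge0 D_real; have [d [d_conj par]] := real_distance HM.
have [n] := ubnP `|potential d D|%N; elim: n D D_ge0 D_real => // n IHn D D_ge0 D_real.
move=> pot_lt; have [/existsP[w /andP[Dw wR]]|all_real] :=
  boolP [exists v, (D v != 0) && (v \notin VR rs)].
  have [D1 [D1_ge0 D1_real DD1 pot_D1]] := potential_step HM d_conj par D_ge0 D_real wR Dw.
  have [|D' [D'_ge0 [D'_real D1D']]] := IHn D1 D1_ge0 D1_real.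
    by move: pot_lt pot_D1 (potential_ge0 d D1_ge0); lia.
  by exists D'; split => //; split => //; apply: lin_equiv_trans DD1 D1D'.
exists D; split => //; split; last exact: lin_equiv_refl.
split => // v Dv; apply: contraNT all_real => vR.
by apply/existsP; exists v; rewrite Dv.
Qed.
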